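(* Let $X$ be a pre-ordered Banach space with a closed cone, and let $X'$ be its dual, ordered by the dual cone $X'_+=\{f\in X': f(x)\ge 0 \text{ for all } x\in X_+\}$. Let $\alpha>0$. Then: (1) $X'$ is approximately $\alpha$-sum-conormal if and only if $X'$ is $\alpha$-sum-conormal; (2) $X'$ is approximately $\alpha$-max-conormal if and only if $X'$ is $\alpha$-max-conormal; (3) $X'$ is approximately $\alpha$-absolutely conormal if and only if $X'$ is $\alpha$-absolutely conormal; (4) $X'$ is approximately $\alpha$-conormal if and only if $X'$ is $\alpha$-conormal.
   Context: A cone in a real Banach space $X$ is a subset $C$ with $C+C\subseteq C$ and $\lambda C\subseteq C$ for all $\lambda\ge0$. A pre-ordered Banach space is a real Banach space $X$ together with a cone $X_+$ (not assumed proper), with $x\ge y$ meaning $x-y\in X_+$. For a pre-ordered Banach space $Z$ with closed cone and $\alpha>0$: $Z$ is $\alpha$-sum-conormal if every $x\in Z$ can be written $x=a-b$ with $a,b\in Z_+$ and $\|a\|+\|b\|\le\alpha\|x\|$; approximately $\alpha$-sum-conormal if for every $x$ and $\varepsilon>0$ there are $a,b\in Z_+$ with $x=a-b$ and $\|a\|+\|b\|<\alpha\|x\|+\varepsilon$. $Z$ is $\alpha$-max-conormal (resp. approximately) if the same holds with $\max\{\|a\|,\|b\|\}$ in place of $\|a\|+\|b\|$. $Z$ is $\alpha$-absolutely conormal if for every $x$ there is $a\in Z_+$ with $-x\le a$, $x\le a$ and $\|a\|\le\alpha\|x\|$; approximately $\alpha$-absolutely conormal if for every $x$ and $\varepsilon>0$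 there is $a\in Z_+$ with $\pm x\le a$ and $\|a\|<\alpha\|x\|+\varepsilon$. $Z$ is $\alpha$-conormal if for every $x$ there is $a\in Z_+$ with $0\le a$, $x\le a$ and $\|a\|\le\alpha\|x\|$; approximately $\alpha$-conormal if for every $x$ and $\varepsilon>0$ there is $a$ with $0\le a$, $x\le a$, $\|a\|<\alpha\|x\|+\varepsilon$. *)

From HB Require Import structures.
From mathcomp Require Import all_boot all_order all_algebra.
From mathcomp Require Import all_classical all_reals all_analysis.
Set Implicit Arguments. Unset Strict Implicit. Unset Printing Implicit Defensive.
Import Order.TTheory GRing.Theory Num.Theory.
Import numFieldNormedType.Exports.
Local Open Scope classical_set_scope.
Local Open Scope ring_scope.

Definition is_cone (R : realType) (V : lmodType R) (C : set V) : Prop :=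
  (forall x y, C x -> C y -> C (x + y)) /\
  (forall (l : R) x, 0 <= l -> C x -> C (l *: x)).

Definition ple (Z : zmodType) (P : set Z) (x y : Z) : Prop := P (y - x).

(** Conormality notions for a pre-ordered normed space presented as
    (carrier [S] inside an ambient zmodType [Z], norm [N], cone [P]).
    All elements range over [S]; the cone is assumed to be a subset of [S]. *)
Section Conormality.
Variables (R : realType) (Z : zmodType) (S : set Z) (N : Z -> R) (P : set Z)
          (alpha : R).

Definition sum_conormal : Prop :=
  forall x, S x -> exists a b, [/\ S a /\ S b, P a /\ P b, x = a - b &
     N a + N b <= alpha * N x].

Definition approx_sum_conormal : Prop :=
  forall x, S x -> forall eps : R, 0 < eps -> exists a b, [/\ S a /\ S b, P a /\ P b,
     x = a - b & N a + N b < alpha * N x + eps].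

Definition max_conormal : Prop :=
  forall x, S x -> exists a b, [/\ S a /\ S b, P a /\ P b, x = a - b &
     Num.max (N a) (N b) <= alpha * N x].

Definition approx_max_conormal : Prop :=
  forall x, S x -> forall eps : R, 0 < eps -> exists a b, [/\ S a /\ S b, P a /\ P b,
     x = a - b & Num.max (N a) (N b) < alpha * N x + eps].

Definition abs_conormal : Prop :=
  forall x, S x -> exists a, [/\ S a, P a, ple P (- x) a, ple P x a &
     N a <= alpha * N x].

Definition approx_abs_conormal : Prop :=
  forall x, S x -> forall eps : R, 0 < eps -> exists a, [/\ S a, P a,
     ple P (- x) a, ple P x a & N a < alpha * N x + eps].

Definition conormal : Prop :=
  forall x, S x -> exists a, [/\ S a, ple P 0 a, ple P x a &
     N a <= alpha * N x].

Definition approx_conormal : Prop :=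
  forall x, S x -> forall eps : R, 0 < eps -> exists a, [/\ S a, ple P 0 a,
     ple P x a & N a < alpha * N x + eps].

End Conormality.

(** The (topological) dual X' of a normed space X, realized inside the
    function space X -> R: continuous linear functionals. *)
Definition dual_space (R : realType) (X : normedModType R) : set (X -> R) :=
  [set f | (forall (a : R) (x y : X), f (a *: x + y) = a * f x + f y)
           /\ continuous f].

Definition dual_norm (R : realType) (X : normedModType R) (f : X -> R) : R :=
  sup [set `|f x| | x in [set x : X | `|x| <= 1]].

Definition dual_cone (R : realType) (X : normedModType R) (C : set X)
  : set (X -> R) :=
  [set f | dual_space f /\ forall x, C x -> 0 <= f x].

From HB Require Import structures.
From mathcomp Require Import all_boot all_order all_algebra.
From mathcomp Require Import all_classical all_reals all_analysis.
Import Order.TTheory GRing.Theory Num.Theory.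
Import numFieldNormedType.Exports.
Local Open Scope classical_set_scope.
Local Open Scope ring_scope.

(* Approximate decompositions with slack 1/(n+1) have uniformly bounded dual
   norms, so their pointwise limit along a free ultrafilter on nat exists and is
   again a continuous linear functional (a sequential form of Banach-Alaoglu).
   The dual cone and its translates are weak*-closed, and the dual norm, the
   max of two translated dual norms and their sum are weak*-lower
   semicontinuous; hence the limit satisfies the constraints with the exact
   bound. *)

Section FilterLimits.
Context {R : realType}.

Lemma ultra_bounded_cvg {I : Type} {U : set_system I} (UU : UltraFilter U)
    {u : I -> R} {K : R} :
  (forall i, `|u i| <= K) -> cvg (u @ U).
Proof.
move=> uK; apply/cvg_ex.
have /(_ (u @ U) _) [|p [_ clp]] := @segment_compact R (- K) K.
  by apply: (@filterE _ U) => i; rewrite /= in_itv /= -ler_norml.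
exists p => V pV; have [//|UnV] := in_ultra_setVsetC (u @^-1` V) UU.
by have [i []] := clp (~` V) V UnV pV.
Qed.

Lemma cvg_le_eps {I : Type} {F : set_system I} {FF : ProperFilter F}
    {u : I -> R} {l c : R} :
  u @ F --> l -> (forall e, 0 < e -> \forall i \near F, u i <= c + e) -> l <= c.
Proof.
move=> ul uc; apply/ler_addgt0Pr => e e0.
exact: (closed_cvg _ (@closed_le R (c + e)) (uc e e0) _ ul).
Qed.

End FilterLimits.

Lemma ple0 (Z : zmodType) (P : set Z) : ple P 0 = P.
Proof. by apply: funext => a; rewrite /ple subr0. Qed.

Section DualNorm.
Context {R : realType} {X : normedModType R}.
Implicit Types (f g : X -> R) (c : R).

Lemma dual_space0 : dual_space (0 : X -> R).
Proof. by split=> [a x y|x]; [rewrite /= mulr0 addr0|exact: cvg_cst]. Qed.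

Lemma dual_spaceD {f g} : dual_space f -> dual_space g -> dual_space (f + g).
Proof.
move=> [fL fC] [gL gC]; split=> [a x y|x].
  by rewrite !fctE fL gL mulrDr addrACA.
exact: continuousD (fC x) (gC x).
Qed.

Lemma dual_spaceN {f} : dual_space f -> dual_space (- f).
Proof.
move=> [fL fC]; split=> [a x y|x]; first by rewrite !fctE fL opprD mulrN.
exact: continuousN (fC x).
Qed.

Definition linfun_of {f}
    (fL : forall (a : R) (x y : X), f (a *: x + y) = a * f x + f y) :
  {linear X -> R} := HB.pack f (GRing.isLinear.Build _ _ _ _ f fL).

Lemma dual_space_bounded {f} : dual_space f ->
  exists M, forall z : X, `|z| <= 1 -> `|f z| <= M.
Proof.
move=> [fL fC]; have fC0 : {for 0, continuous (linfun_of fL)} := fC 0.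
by have /bounded_funP/(_ 1) := continuous_linear_bounded 0 fC0.
Qed.

Lemma ler_dual_norm {f z} : dual_space f -> `|z| <= 1 -> `|f z| <= dual_norm f.
Proof.
move=> /dual_space_bounded [M fM] z1; apply: ub_le_sup; last by exists z.
by exists M => _ [y y1 <-]; apply: fM.
Qed.

Lemma dual_norm_le f c : (forall z : X, `|z| <= 1 -> `|f z| <= c) -> dual_norm f <= c.
Proof.
move=> fc; apply: ge_sup; first by exists `|f 0|, 0 => //=; rewrite normr0.
by move=> _ [z z1 <-]; apply: fc.
Qed.

Lemma dual_norm_ge0 {f} : dual_space f -> 0 <= dual_norm f.
Proof.
by move=> Sf; rewrite (le_trans _ (ler_dual_norm Sf (_ : `|0 : X| <= 1))) ?normr0.
Qed.

Lemma ler_dual_normM {f} y : dual_space f -> `|f y| <= dual_norm f * `|y|.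
Proof.
move=> Sf; have [->|y0] := eqVneq y 0.
  by rewrite (linear0 (linfun_of (proj1 Sf)) : f 0 = 0) !normr0 mulr0.
have ny : 0 < `|y| by rewrite normr_gt0.
have := ler_dual_norm Sf (_ : `|(`|y|^-1 *: y)| <= 1).
rewrite (linearZ_LR (linfun_of (proj1 Sf)) _ y : f _ = _) normrM normfV normr_id.
rewrite ler_pdivrMl // mulrC; apply.
by rewrite normrZ normfV normr_id mulVf ?gt_eqF.
Qed.

Lemma dual_normD_le f g c :
    (forall y z : X, `|y| <= 1 -> `|z| <= 1 -> `|f y| + `|g z| <= c) ->
  dual_norm f + dual_norm g <= c.
Proof.
move=> fgc; rewrite -lerBrDl; apply: dual_norm_le => z z1.
rewrite lerBrDl addrC -lerBrDl; apply: dual_norm_le => y y1.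
by rewrite lerBrDl addrC; apply: fgc.
Qed.

End DualNorm.

Section WeakStar.
Context {R : realType} {X : normedModType R}.
Implicit Types (f g h : X -> R) (c : R).

Definition wstar_cvg {I : Type} (U : set_system I) (fs : I -> X -> R) g :=
  forall y, fs^~ y @ U --> g y.

(* Filters on an arbitrary index type stand for nets, so these are weak*-closedness
   and weak*-lower semicontinuity on the dual. *)
Definition wstar_closed (Q : set (X -> R)) :=
  forall (I : Type) (U : set_system I) (FU : ProperFilter U) (fs : I -> X -> R) g,
    (forall i, dual_space (fs i)) -> dual_space g -> wstar_cvg U fs g ->
    (forall i, Q (fs i)) -> Q g.

Definition wstar_lsc (phi : (X -> R) -> R) :=
  forall (I : Type) (U : set_system I) (FU : ProperFilter U) (fs : I -> X -> R) g c,
    (forall i, dual_space (fs i)) -> dual_space g -> wstar_cvg U fs g ->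
    (forall e, 0 < e -> \forall i \near U, phi (fs i) <= c + e) -> phi g <= c.

Lemma wstar_cvgDr {I : Type} {U : set_system I} {FU : Filter U} {fs : I -> X -> R} {g} h :
  wstar_cvg U fs g -> wstar_cvg U (fun i => fs i + h) (g + h).
Proof. by move=> fsg y; apply: cvgD (fsg y) (cvg_cst (h y)). Qed.

Lemma dual_space_wstar_limit {I : Type} {U : set_system I} {FU : ProperFilter U}
    {fs : I -> X -> R} {g} {M : R} :
  (forall i, dual_space (fs i)) -> (forall i, dual_norm (fs i) <= M) ->
  wstar_cvg U fs g -> dual_space g.
Proof.
move=> Sfs fsM fsg.
have gM y : `|g y| <= M * `|y|.
  apply: (closed_cvg _ (@closed_le R _) _ _ (cvg_norm (fsg y))).
  by apply: filterE => i; rewrite /= (le_trans (ler_dual_normM y (Sfs i))) ?ler_wpM2r.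
have gL a x y : g (a *: x + y) = a * g x + g y.
  apply: (cvg_unique (@norm_hausdorff _ _) (fsg (a *: x + y))) => /=.
  have -> : fs^~ (a *: x + y) = fun i => a * fs i x + fs i y.
    by apply: funext => i; rewrite /= (proj1 (Sfs i)).
  exact: cvgD (cvgM (cvg_cst a) (fsg x)) (fsg y).
split=> //; apply: (@bounded_linear_continuous _ _ _ (linfun_of gL)).
apply/bounded_funP => r; exists (M * r) => x xr.
apply: le_trans (gM x) _; rewrite ler_wpM2l //.
have [i _] := filter_ex (@filterT _ U _).
exact: le_trans (dual_norm_ge0 (Sfs i)) (fsM i).
Qed.

Lemma wstar_cvg_ultra_bounded {I : Type} {U : set_system I} (UU : UltraFilter U)
    {fs : I -> X -> R} {M : R} :
  (forall i, dual_space (fs i)) -> (forall i, dual_norm (fs i) <= M) ->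
  exists g, wstar_cvg U fs g.
Proof.
move=> Sfs fsM; exists (fun y => lim (fs^~ y @ U)) => y.
apply: (ultra_bounded_cvg UU (K := M * `|y|)) => i.
by rewrite (le_trans (ler_dual_normM y (Sfs i))) ?ler_wpM2r.
Qed.

Lemma wstar_closed_ple (C : set X) {h} :
  dual_space h -> wstar_closed (ple (dual_cone C) h).
Proof.
move=> Sh I U FU fs g _ Sg fsg fsC; split=> [|x Cx].
  exact: dual_spaceD Sg (dual_spaceN Sh).
apply: (closed_cvg _ (@closed_ge R 0) _ _ (wstar_cvgDr (- h) fsg x)) => /=.
by apply: filterE => i; have [_] := fsC i; apply.
Qed.

Lemma wstar_closed_dual_cone (C : set X) : wstar_closed (dual_cone C).
Proof. by have := wstar_closed_ple C dual_space0; rewrite ple0. Qed.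

Lemma wstar_closedI {P Q : set (X -> R)} :
  wstar_closed P -> wstar_closed Q -> wstar_closed (P `&` Q).
Proof.
move=> Pcl Qcl I U FU fs g Sfs Sg fsg PQfs.
by split; [apply: (Pcl _ U _ fs) | apply: (Qcl _ U _ fs)] => // i; have [] := PQfs i.
Qed.

Lemma wstar_lsc_dual_norm : wstar_lsc (@dual_norm R X).
Proof.
move=> I U FU fs g c Sfs _ fsg fsc; apply: dual_norm_le => z z1.
apply: (cvg_le_eps (cvg_norm (fsg z))) => e /fsc; apply: filterS => i.
exact/le_trans/ler_dual_norm.
Qed.

Lemma wstar_lsc_shift {phi : (X -> R) -> R} {h} :
  dual_space h -> wstar_lsc phi -> wstar_lsc (fun f => phi (f + h)).
Proof.
move=> Sh phil I U FU fs g c Sfs Sg fsg.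
apply: (phil _ U _ (fun i => fs i + h)); last exact: wstar_cvgDr.
  by move=> i; apply: dual_spaceD.
exact: dual_spaceD.
Qed.

Lemma wstar_lsc_max {phi psi : (X -> R) -> R} :
  wstar_lsc phi -> wstar_lsc psi -> wstar_lsc (fun f => Num.max (phi f) (psi f)).
Proof.
move=> phil psil I U FU fs g c Sfs Sg fsg fsc; rewrite ge_max.
by apply/andP; split; [apply: (phil _ U _ fs) | apply: (psil _ U _ fs)] => // e
  /fsc; apply: filterS => i; rewrite ge_max => /andP[].
Qed.

Lemma wstar_lsc_dual_normD {h} :
  dual_space h -> wstar_lsc (fun f => dual_norm (f + h) + dual_norm f).
Proof.
move=> Sh I U FU fs g c Sfs _ fsg fsc; apply: dual_normD_le => y z y1 z1.
apply: (cvg_le_eps (cvgD (cvg_norm (wstar_cvgDr h fsg y)) (cvg_norm (fsg z)))).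
move=> e /fsc; apply: filterS => i /=; apply: le_trans.
by rewrite fctE; apply: lerD; apply: ler_dual_norm => //; apply: dual_spaceD.
Qed.

End WeakStar.

Lemma wstar_approx_attained {R : realType} {X : normedModType R}
    {Q : set (X -> R)} {phi : (X -> R) -> R} (c : R) :
  wstar_closed Q -> wstar_lsc phi ->
  (forall f, dual_space f -> dual_norm f <= phi f) ->
  (forall e, 0 < e -> exists f, [/\ dual_space f, Q f & phi f < c + e]) ->
  exists g, [/\ dual_space g, Q g & phi g <= c].
Proof.
move=> Qcl phil phi_ge approx.
have approx_n (n : nat) :
    exists f, [/\ dual_space f, Q f & phi f < c + n.+1%:R^-1].
  by apply: approx; rewrite invr_gt0.
have [fs fsP] := choice approx_n.
have Sfs n : dual_space (fs n) by have [] := fsP n.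
have fsM n : dual_norm (fs n) <= c + 1.
  have [_ _ /ltW fsc] := fsP n; rewrite (le_trans (phi_ge _ (Sfs n))) //.
  by rewrite (le_trans fsc) // lerD2l invf_le1 ?ler1n.
have [U [UU ooU]] := ultraFilterLemma (eventually_filter : ProperFilter \oo).
have PU : ProperFilter U := @ultra_proper _ _ UU.
have [g fsg] := wstar_cvg_ultra_bounded UU Sfs fsM.
have Sg := dual_space_wstar_limit Sfs fsM fsg (FU := PU).
exists g; split=> //; first by apply: (Qcl _ U _ fs) => // n; have [] := fsP n.
apply: (phil _ U _ fs) => // e e0; apply: ooU; near=> n.
have [_ _ /ltW /le_trans] := fsP n; apply; rewrite lerD2l.
by near: n; apply: filterS (near_infty_natSinv_lt (PosNum e0)) => n /ltW.
Unshelve. all: by end_near.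
Qed.

Section ExactIsApprox.
Variables (R : realType) (Z : zmodType) (S : set Z) (N : Z -> R) (P : set Z)
  (alpha : R).

Lemma sum_conormalW : sum_conormal S N P alpha -> approx_sum_conormal S N P alpha.
Proof.
move=> h x Sx e e0; have [a [b [Sab Pab xE ab]]] := h x Sx.
by exists a, b; split=> //; apply: le_lt_trans ab _; rewrite ltrDl.
Qed.

Lemma max_conormalW : max_conormal S N P alpha -> approx_max_conormal S N P alpha.
Proof.
move=> h x Sx e e0; have [a [b [Sab Pab xE ab]]] := h x Sx.
by exists a, b; split=> //; apply: le_lt_trans ab _; rewrite ltrDl.
Qed.

Lemma abs_conormalW : abs_conormal S N P alpha -> approx_abs_conormal S N P alpha.
Proof.
move=> h x Sx e e0; have [a [Sa Pa xa xa' ax]] := h x Sx.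
by exists a; split=> //; apply: le_lt_trans ax _; rewrite ltrDl.
Qed.

Lemma conormalW : conormal S N P alpha -> approx_conormal S N P alpha.
Proof.
move=> h x Sx e e0; have [a [Sa Pa xa ax]] := h x Sx.
by exists a; split=> //; apply: le_lt_trans ax _; rewrite ltrDl.
Qed.

End ExactIsApprox.

Section DualConormal.
Context {R : realType} {X : normedModType R}.
Variables (C : set X) (alpha : R).
Local Notation approx_dual notion :=
  (notion _ _ (@dual_space R X) (@dual_norm R X) (dual_cone C) alpha).

Lemma dual_sum_conormal_of_approx :
  approx_dual approx_sum_conormal -> approx_dual sum_conormal.
Proof.
(* Optimize over [b] alone: the positive part is [b + x], and [ple _ (- x) b]
   says that it lies in the dual cone. *)
move=> happ x Sx.
have [|e e0|b [Sb [Cb Cbx] nb]] := wstar_approx_attained (alpha * dual_norm x)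
  (wstar_closedI (wstar_closed_dual_cone C) (wstar_closed_ple C (dual_spaceN Sx)))
  (wstar_lsc_dual_normD Sx).
- by move=> f Sf; rewrite lerDr dual_norm_ge0 //; exact: dual_spaceD.
- have [a [b [[Sa Sb] [Ca Cb] xE ab]]] := happ x Sx e e0.
  have ax : b + x = a by rewrite xE addrC subrK.
  by exists b; split; rewrite // ?ax //; split; rewrite // /ple opprK ax.
- rewrite /ple opprK in Cbx.
  exists (b + x), b; split=> //; first by split=> //; exact: dual_spaceD.
  by rewrite addrC addKr.
Qed.

Lemma dual_max_conormal_of_approx :
  approx_dual approx_max_conormal -> approx_dual max_conormal.
Proof.
move=> happ x Sx.
have [|e e0|b [Sb [Cb Cbx] nb]] := wstar_approx_attained (alpha * dual_norm x)
  (wstar_closedI (wstar_closed_dual_cone C) (wstar_closed_ple C (dual_spaceN Sx)))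
  (wstar_lsc_max (wstar_lsc_shift Sx wstar_lsc_dual_norm) wstar_lsc_dual_norm).
- by move=> f _; rewrite le_max lexx orbT.
- have [a [b [[Sa Sb] [Ca Cb] xE ab]]] := happ x Sx e e0.
  have ax : b + x = a by rewrite xE addrC subrK.
  by exists b; split; rewrite // ?ax //; split; rewrite // /ple opprK ax.
- rewrite /ple opprK in Cbx.
  exists (b + x), b; split=> //; first by split=> //; exact: dual_spaceD.
  by rewrite addrC addKr.
Qed.

Lemma dual_abs_conormal_of_approx :
  approx_dual approx_abs_conormal -> approx_dual abs_conormal.
Proof.
move=> happ x Sx.
have [|e e0|a [Sa [Ca [xa xa']] na]] := wstar_approx_attained (alpha * dual_norm x)
  (wstar_closedI (wstar_closed_dual_cone C)
    (wstar_closedI (wstar_closed_ple C (dual_spaceN Sx)) (wstar_closed_ple C Sx)))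
  wstar_lsc_dual_norm.
- by move=> f _.
- by have [a [Sa Ca xa xa' na]] := happ x Sx e e0; exists a.
- by exists a.
Qed.

Lemma dual_conormal_of_approx :
  approx_dual approx_conormal -> approx_dual conormal.
Proof.
move=> happ x Sx.
have [|e e0|a [Sa [Ca xa] na]] := wstar_approx_attained (alpha * dual_norm x)
  (wstar_closedI (wstar_closed_ple C dual_space0) (wstar_closed_ple C Sx))
  wstar_lsc_dual_norm.
- by move=> f _.
- by have [a [Sa Ca xa na]] := happ x Sx e e0; exists a.
- by exists a.
Qed.

End DualConormal.

Theorem lemma3p8 (R : realType) (X : completeNormedModType R) (C : set X)
  (hcone : is_cone C) (hclosed : closed C) (alpha : R) (halpha : 0 < alpha) :
  [/\ approx_sum_conormal (@dual_space R X) (@dual_norm R X) (dual_cone C) alpha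
        <-> sum_conormal (@dual_space R X) (@dual_norm R X) (dual_cone C) alpha,
      approx_max_conormal (@dual_space R X) (@dual_norm R X) (dual_cone C) alpha
        <-> max_conormal (@dual_space R X) (@dual_norm R X) (dual_cone C) alpha,
      approx_abs_conormal (@dual_space R X) (@dual_norm R X) (dual_cone C) alpha
        <-> abs_conormal (@dual_space R X) (@dual_norm R X) (dual_cone C) alpha &
      approx_conormal (@dual_space R X) (@dual_norm R X) (dual_cone C) alpha
        <-> conormal (@dual_space R X) (@dual_norm R X) (dual_cone C) alpha].
Proof.
split; split.
- exact: dual_sum_conormal_of_approx.
- exact: sum_conormalW.
- exact: dual_max_conormal_of_approx.
- exact: max_conormalW.
- exact: dual_abs_conormal_of_approx.
- exact: abs_conormalW.
- exact: dual_conormal_of_approx.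
- exact: conormalW.
Qed.
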